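(* Let $H = (V,E)$ be a hypertree with $E = \{e_1, \ldots, e_k\}$. Suppose that each edge $e_i$ has an associated (strict) partial order $<_i$ on the vertex set $e_i$. Define the relation $<$ on $V$ as the transitive closure of all the relations $<_i$, i.e. $x < y$ iff there is a chain $x = v_1 <_{i_1} v_2 <_{i_2} \cdots <_{i_{l-1}} v_l = y$ with $l \ge 2$. Then $(V, <)$ is a poset.
   Context: A hypergraph is a pair $H=(V,E)$ with $V$ finite and $E$ a family of subsets of $V$ (edges) with $|e|>1$ for each $e\in E$. A path is a sequence $v_1, e_1, v_2, e_2, \ldots, e_m, v_{m+1}$ with $e_i \in E$, $v_i, v_{i+1} \in e_i$, the edges distinct and the vertices distinct except that $v_1 = v_{m+1}$ is allowed; if $v_1 = v_{m+1}$ and $m>1$ it is a cycle. $H$ is connected if there is a path between any two vertices. A hypertree is a connected hypergraph with no cycles. *)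

From mathcomp Require Import all_boot.
Set Implicit Arguments. Unset Strict Implicit. Unset Printing Implicit Defensive.

Section Hyper.
Variable V : finType.

Definition hypergraph (E : {set {set V}}) : Prop :=
  forall e, e \in E -> 1 < #|e|.

(* hpath E v1 vs es : with vs = [v_2; ...; v_{m+1}] and es = [e_1; ...; e_m],
   the sequence v_1, e_1, v_2, ..., e_m, v_{m+1} is a path:
   each e_i \in E, v_i, v_{i+1} \in e_i, the edges are distinct, and the
   vertices are distinct except that v_1 = v_{m+1} is allowed
   (i.e. [v_1..v_m] and [v_2..v_{m+1}] are both duplicate-free). *)
Definition hpath (E : {set {set V}}) (v1 : V) (vs : seq V) (es : seq {set V}) : Prop :=
  [/\ size vs = size es,
      forall i, i < size es ->
        [/\ nth set0 es i \in E,
            nth v1 (v1 :: vs) i \in nth set0 es i &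
            nth v1 (v1 :: vs) i.+1 \in nth set0 es i],
      uniq es,
      uniq (take (size es) (v1 :: vs)) &
      uniq vs].

Definition hpath_between (E : {set {set V}}) (x y : V) : Prop :=
  exists vs es, hpath E x vs es /\ last x vs = y.

Definition hcycle (E : {set {set V}}) (v1 : V) (vs : seq V) (es : seq {set V}) : Prop :=
  [/\ hpath E v1 vs es, last v1 vs = v1 & 1 < size es].

Definition hconnected (E : {set {set V}}) : Prop :=
  forall x y : V, hpath_between E x y.

Definition hypertree (E : {set {set V}}) : Prop :=
  [/\ hypergraph E, hconnected E & ~ exists v1 vs es, hcycle E v1 vs es].

Definition strict_porder_on (e : {set V}) (r : rel V) : Prop :=
  [/\ forall x y, r x y -> x \in e /\ y \in e,
      forall x, ~ r x x &
      forall x y z, r x y -> r y z -> r x z].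

Definition edge_step (E : {set {set V}}) (lt : {set V} -> rel V) : rel V :=
  fun x y => [exists e in E, lt e x y].

Definition tclosure (E : {set {set V}}) (lt : {set V} -> rel V) (x y : V) : Prop :=
  exists s : seq V, [/\ s != [::], path (edge_step E lt) x s & last x s = y].

Definition strict_poset (r : V -> V -> Prop) : Prop :=
  (forall x, ~ r x x) /\ (forall x y z, r x y -> r y z -> r x z).

End Hyper.

From mathcomp Require Import all_boot zify.
Set Implicit Arguments. Unset Strict Implicit. Unset Printing Implicit Defensive.

(* A chain x = v_0 <_{e_1} v_1 <_{e_2} ... <_{e_l} v_l = x is encoded as the cyclic
   sequence of steps (e_i, v_i).  Among such cyclic chains take a shortest one.  Its
   vertices are distinct, since otherwise it can be cut at a repeated vertex, and
   cyclically consecutive edges differ, since two steps inside one edge merge by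
   transitivity of <_e (and a single step contradicts irreflexivity).  It is then a
   closed walk of length at least 2 with distinct vertices; cutting such a walk at a
   repeated edge keeps these properties, so eventually the edges are distinct too and
   we obtain a cycle of the hypertree. *)

Lemma not_path_split (T : Type) (r : rel T) x s : ~~ path r x s ->
  exists s1 a b s2, x :: s = s1 ++ [:: a, b & s2] /\ ~~ r a b.
Proof.
elim: s x => [|y s IH] x //=; have [rxy /= /IH|nrxy _] := boolP (r x y).
  by move=> [s1 [a [b [s2 [-> nrab]]]]]; exists (x :: s1), a, b, s2.
by exists [::], x, y, s.
Qed.

Lemma not_cycle_rot (T : Type) (r : rel T) t : 1 < size t -> ~~ cycle r t ->
  exists k a b s, rot k t = [:: a, b & s] /\ ~~ r a b.
Proof.
case: t => [|x t] //= t_gt0; rewrite rcons_path negb_and => /orP [].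
  move=> /(@not_path_split _ r) [s1 [a [b [s2 [xt nrab]]]]].
  by exists (size s1), a, b, (s2 ++ s1); rewrite xt rot_size_cat.
case/lastP: t t_gt0 => [|t y] //= _; rewrite last_rcons => nryx.
by exists (size (x :: t)), y, x, t; rewrite -rcons_cons -cats1 rot_size_cat.
Qed.

Lemma not_uniq_map_split (T U : eqType) (f : T -> U) t : ~~ uniq (map f t) ->
  exists t1 p t2 q t3, t = t1 ++ p :: t2 ++ q :: t3 /\ f p = f q.
Proof.
elim: t => [|x t IH] //=.
have [/mapP [y yt fxy] _|_ /= /IH] := boolP (f x \in map f t).
  by case/splitPr: yt => t2 t3; exists [::], x, t2, y, t3.
by move=> [t1 [p [t2 [q [t3 [-> fpq]]]]]]; exists (x :: t1), p, t2, q, t3.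
Qed.

Lemma not_uniq_map_rot (T U : eqType) (f : T -> U) t : ~~ uniq (map f t) ->
  exists k p t2 q t3, rot k t = p :: t2 ++ q :: t3 /\ f p = f q.
Proof.
move=> /not_uniq_map_split [t1 [p [t2 [q [t3 [-> fpq]]]]]].
by exists (size t1), p, t2, q, (t3 ++ t1); rewrite rot_size_cat /= -catA.
Qed.

Section Walks.
Variables (V : finType) (E : {set {set V}}).

Definition walk_step (a b : {set V} * V) :=
  [&& b.1 \in E, a.2 \in b.1, b.2 \in b.1 & a.1 != b.1].

Lemma cycle_walk_step_head a s :
  cycle walk_step (a :: s) -> (a.1 \in E) && (a.2 \in a.1).
Proof. by rewrite /= rcons_path => /andP [_ /and4P [-> _ -> _]]. Qed.

Lemma hcycle_of_walk t : 1 < size t -> uniq (map fst t) -> uniq (map snd t) ->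
  cycle walk_step t -> exists v1 vs es, hcycle E v1 vs es.
Proof.
case/lastP: t => [//|t a] t_gt1 uniq_es uniq_vs.
rewrite (cycle_path a) last_rcons => walk_t.
exists a.2, (map snd (rcons t a)), (map fst (rcons t a)).
split; last by rewrite size_map.
- split => //; first by rewrite !size_map.
  + move=> i; rewrite size_map => ilt.
    have /and4P [eE ve ve' _] := pathP a walk_t i ilt.
    rewrite (nth_map a) //; split=> //.
      by rewrite -(map_cons snd) (nth_map a) // ltnW.
    by rewrite /= (nth_map a).
  + rewrite size_map size_rcons map_rcons -rcons_cons -cats1 take_size_cat; last first.
      by rewrite /= size_map.
    by rewrite -(rot_uniq 1) rot1_cons -map_rcons.
- by rewrite map_rcons last_rcons.
Qed.

Lemma walk_cut_edge p t2 q t3 : p.1 = q.1 ->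
  cycle walk_step (p :: t2 ++ q :: t3) ->
  1 < size (p :: t2) /\ cycle walk_step (p :: t2).
Proof.
move=> epq walk_t; have /andP [pE vp] := cycle_walk_step_head walk_t.
move: walk_t; rewrite /= rcons_path cat_path /= => /andP [/and3P [walk_t2 step_q _] _].
split; first by case: t2 walk_t2 step_q => //=; rewrite /walk_step epq eqxx !andbF.
rewrite rcons_path walk_t2 /=; move: step_q; rewrite /walk_step -epq pE vp.
by case/and4P => _ -> _ ->.
Qed.

Lemma walk_hcycle t : 1 < size t -> uniq (map snd t) -> cycle walk_step t ->
  exists v1 vs es, hcycle E v1 vs es.
Proof.
have [n] := ubnP (size t); elim: n t => // n IH t t_le t_gt1 uniq_vs walk_t.
have [uniq_es|] := boolP (uniq (map fst t)).
  exact: (hcycle_of_walk t_gt1 uniq_es uniq_vs walk_t).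
move=> /not_uniq_map_rot [k [p [t2 [q [t3 [tk epq]]]]]].
rewrite -(rot_cycle k) tk in walk_t.
have [t'_gt1 walk_t'] := walk_cut_edge epq walk_t.
apply: IH walk_t' => //.
  by move: t_le; rewrite -(size_rot k) tk /= size_cat /=; lia.
move: uniq_vs; rewrite -(rot_uniq k) -map_rot tk -cat_cons map_cat cat_uniq.
by case/andP.
Qed.

End Walks.

Section Chains.
Variables (V : finType) (E : {set {set V}}) (lt : {set V} -> rel V).
Hypothesis lt_porder : forall e, e \in E -> strict_porder_on e (lt e).

Definition chain_step (a b : {set V} * V) := (b.1 \in E) && lt b.1 a.2 b.2.

Lemma path_chain_step_vertex a b s :
  a.2 = b.2 -> path chain_step a s = path chain_step b s.
Proof. by case: s => //= c s; rewrite /chain_step => ->. Qed.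

Lemma cycle_chain_step1 a : ~~ cycle chain_step [:: a].
Proof.
apply/negP; rewrite /= /chain_step andbT => /andP [aE lt_aa].
by have [_ irr _] := lt_porder aE; apply: (irr a.2).
Qed.

Lemma chain_cut_vertex p t2 q t3 : p.2 = q.2 ->
  cycle chain_step (p :: t2 ++ q :: t3) -> cycle chain_step (q :: t2).
Proof.
move=> vpq; rewrite /= rcons_path cat_path /= => /andP [/and3P [chain_t2 step_q _] _].
by rewrite (path_chain_step_vertex _ (esym vpq)) rcons_path chain_t2.
Qed.

Lemma chain_merge a b s : a.1 = b.1 ->
  cycle chain_step [:: a, b & s] -> cycle chain_step (b :: s).
Proof.
move=> eab; rewrite /= !rcons_path => /and3P [/andP [bE lt_ab] -> step_a] /=.
move: step_a; rewrite /chain_step bE eab => /andP [_ lt_ca].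
by have [_ _ tr] := lt_porder bE; apply: tr lt_ca lt_ab.
Qed.

Lemma chain_step_walk a b : chain_step a b -> a.1 != b.1 -> walk_step E a b.
Proof.
rewrite /chain_step /walk_step => /andP [bE lt_ab] ->; rewrite bE andbT /=.
by have [sub _ _] := lt_porder bE; have [-> ->] := sub _ _ lt_ab.
Qed.

Hypothesis no_hcycle : ~ exists v1 vs es, hcycle E v1 vs es.

Lemma no_chain_cycle t : t != [::] -> ~~ cycle chain_step t.
Proof.
have [n] := ubnP (size t); elim: n t => // n IH t t_le t_n0; apply/negP => chain_t.
have [t1|t_gt1] := leqP (size t) 1.
  by case: t t_le t_n0 t1 chain_t => [|a []] // _ _ _; apply/negP/cycle_chain_step1.
have [uniq_vs|] := boolP (uniq (map snd t)); last first.
  move=> /not_uniq_map_rot [k [p [t2 [q [t3 [tk vpq]]]]]].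
  rewrite -(rot_cycle k) tk in chain_t.
  apply/negP: (chain_cut_vertex vpq chain_t); apply: IH => //.
  by move: t_le; rewrite -(size_rot k) tk /= size_cat /=; lia.
have [edges_t|] := boolP (cycle (fun a b => a.1 != b.1) t).
  apply: no_hcycle; apply: (walk_hcycle t_gt1 uniq_vs).
  apply: sub_cycle (_ : cycle [rel a b | chain_step a b && (a.1 != b.1)] t).
    by move=> a b /andP [] /chain_step_walk.
  by rewrite cycle_relI chain_t.
move=> /(not_cycle_rot t_gt1) [k [a [b [s [tk /negPn /eqP eab]]]]].
rewrite -(rot_cycle k) tk in chain_t.
apply/negP: (chain_merge eab chain_t); apply: IH => //.
by move: t_le; rewrite -(size_rot k) tk /=; lia.
Qed.

End Chains.

Section Closure.
Variables (V : finType) (E : {set {set V}}) (lt : {set V} -> rel V).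

Lemma tclosure_trans x y z :
  tclosure E lt x y -> tclosure E lt y z -> tclosure E lt x z.
Proof.
move=> [s1 [s1_n0 path1 <-]] [s2 [_ path2 <-]]; exists (s1 ++ s2).
by rewrite cat_path path1 path2 last_cat; case: s1 s1_n0 {path1 path2}.
Qed.

Lemma path_edge_step_chain x0 e0 s : path (edge_step E lt) x0 s ->
  exists2 t, map snd t = s & path (chain_step E lt) (e0, x0) t.
Proof.
elim: s x0 e0 => [|x s IH] x0 e0 /=; first by exists [::].
case/andP => /exists_inP [e eE lt_e] /(IH x e) [t <- chain_t].
by exists ((e, x) :: t); rewrite //= {1}/chain_step eE lt_e.
Qed.

Lemma tclosure_refl_cycle x : tclosure E lt x x ->
  exists2 t, t != [::] & cycle (chain_step E lt) t.
Proof.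
move=> [s [s_n0 edge_s last_s]].
have [t vs_t chain_t] := path_edge_step_chain set0 edge_s.
case: t vs_t chain_t => [vs_t _|a t vs_t chain_t]; first by rewrite -vs_t in s_n0.
exists (a :: t) => //.
rewrite (cycle_path a) (@path_chain_step_vertex _ E lt _ (set0, x)) //.
by rewrite -last_s -vs_t /= (last_map snd).
Qed.

End Closure.

Theorem lemma3p2 (V : finType) (E : {set {set V}}) (lt : {set V} -> rel V) :
  hypertree E ->
  (forall e, e \in E -> strict_porder_on e (lt e)) ->
  strict_poset (tclosure E lt).
Proof.
move=> [_ _ no_hcycle] lt_porder; split; last exact: tclosure_trans.
move=> x /tclosure_refl_cycle [t t_n0].
exact/negP/(no_chain_cycle lt_porder no_hcycle).
Qed.
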